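(* Let $m\ge 3$ be an integer. (1) Let $G\in\mathcal{H}_m$ and let $G_0,G_1,\dots,G_t,G$ be an $m$-decomposition of $G$ such that either $t=1$ and $G_t\neq G$, or $t\ge 2$. Then there exist positive integers $a,b$ with $b\le m$ such that $\rho^{\max}(G)=1+\frac{1}{m-1+b/a}$. (2) Let $\rho\in\left(1,\frac{m}{m-1}\right)$. Then there exists $\eta\in\mathbb{N}$ such that for every integer $v>\eta$, every graph $G\in\mathcal{H}_m$ with $v$ vertices has a subgraph with at most $\eta$ vertices whose density exceeds $\rho$.
   Context: All graphs are finite, simple, undirected. For a graph $G$, $v(G)$ and $e(G)$ are its numbers of vertices and edges, $\rho(G)=e(G)/v(G)$ its density, and $\rho^{\max}(G)=\max\{\rho(H):H\subseteq G\}$ (over all subgraphs). Let $H\subset G$ and $m$ a positive integer. $G$ is an $m$-extension of $H$ of the first type if $m\ge3$, $\rho^{\max}(G)<\frac{m}{m-1}$, and there is a vertex $x_1\in V(H)$ and integers $t_1\ge0$, $t_2\ge2$ with $t_1+t_2\le m-1$ such that $V(G)\setminus V(H)=\{y^1_1,\dots,y^1_{t_1},y^2_1,\dots,y^2_{t_2}\}$ and $E(G)\setminus E(H)=\{\{x_1,y^1_1\},\{y^1_1,y^1_2\},\dots,\{y^1_{t_1-1},y^1_{t_1}\},\{y^1_{t_1},y^2_1\},\{y^2_1,y^2_2\},\dots,\{y^2_{t_2-1},y^2_{t_2}\},\{y^2_{t_2},y^1_1\}\}$ (i.e. a path from $x_1$ followed by a cycle; when $t_1=0$, $x_1$ itself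 plays the role of $y^1_1$, being adjacent to $y^2_1$ and $y^2_{t_2}$). $G$ is an $m$-extension of $H$ of the second type if $m\ge2$, $\rho^{\max}(G)<\frac{m}{m-1}$, and there are distinct vertices $x_1,x_2\in V(H)$ and new vertices $y_1,\dots,y_t$ with $1\le t\le m-1$ such that $G=(V(H)\sqcup\{y_1,\dots,y_t\},\,E(H)\sqcup\{\{x_1,y_1\},\{y_1,y_2\},\dots,\{y_{t-1},y_t\},\{y_t,x_2\}\})$. $G$ is an $m$-extension of $H$ of the third type if $m\ge2$, $V(H)=V(G)$, $E(H)\subset E(G)$ and $\rho^{\max}(G)<\frac{m}{m-1}$. For $m\ge3$, $\mathcal{H}_m$ is the smallest class of graphs (up to isomorphism) containing the one-vertex graph with no edges and closed under taking $m$-extensions of the first, second and third types. An $m$-decomposition of $G\in\mathcal{H}_m$ is a sequence of graphs $G_0\subset G_1\subset\dots\subset G_t\subseteq G$, where $G_0$ is a one-vertex edgeless graph, $G_i\ne G_{i+1}$ for all $i$, each $G_i$ ($1\le i\le t$) is an $m$-extension of the first or second type of $G_{i-1}$, and $G$ either equals $G_t$ or is an $m$-extension of the third type of $G_t$. *)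

From HB Require Import structures.
From mathcomp Require Import all_boot all_order all_algebra.
From mathcomp Require Import finmap.
From mathcomp Require Import reals.
Set Implicit Arguments. Unset Strict Implicit. Unset Printing Implicit Defensive.
Import Order.TTheory GRing.Theory Num.Theory.
Local Open Scope fset_scope.

(* A (finite simple) graph: a finite set of vertices (labelled by naturals)
   and a finite set of edges, each edge being a 2-element set of vertices. *)
Record graph := Graph { gV : {fset nat}; gE : {fset {fset nat}} }.

Definition is_graph (G : graph) : Prop :=
  forall e, e \in gE G -> #|` e| = 2%N /\ e `<=` gV G.

Definition nv (G : graph) : nat := #|` gV G|.
Definition ne (G : graph) : nat := #|` gE G|.

Definition density (G : graph) : rat := ((ne G)%:R / (nv G)%:R)%R.

Definition subgraph (H G : graph) : Prop :=
  is_graph H /\ gV H `<=` gV G /\ gE H `<=` gE G.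

Definition rhomax_lt (G : graph) (r : rat) : Prop :=
  forall H, subgraph H G -> (0 < nv H)%N -> (density H < r)%R.

Definition is_rhomax (G : graph) (r : rat) : Prop :=
  (exists H, subgraph H G /\ (0 < nv H)%N /\ density H = r) /\
  (forall H, subgraph H G -> (0 < nv H)%N -> (density H <= r)%R).

Definition mbound (m : nat) : rat := (m%:R / (m.-1)%:R)%R.

Definition walk_edges (s : seq nat) : {fset {fset nat}} :=
  seq_fset tt (map (fun p => [fset p.1; p.2]) (zip s (behead s))).

Definition one_vertex (G : graph) : Prop :=
  exists x, gV G = [fset x] /\ gE G = fset0.

Definition ext1 (m : nat) (H G : graph) : Prop :=
  (3 <= m)%N /\ is_graph G /\ subgraph H G /\ rhomax_lt G (mbound m) /\
  exists (x1 : nat) (t1 t2 : nat) (y1 y2 : seq nat),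
    x1 \in gV H /\ size y1 = t1 /\ size y2 = t2 /\ (2 <= t2)%N /\
        (t1 + t2 <= m.-1)%N /\ uniq (y1 ++ y2) /\
        all (fun y => y \notin gV H) (y1 ++ y2) /\
        gV G = gV H `|` seq_fset tt (y1 ++ y2) /\
        (* path x1, y^1_1, ..., y^1_{t1}, y^2_1, ..., y^2_{t2}, closed back to
           y^1_1 (to x1 when t1 = 0) *)
        gE G = gE H `|` walk_edges (x1 :: y1 ++ y2 ++ [:: head x1 y1]).

Definition ext2 (m : nat) (H G : graph) : Prop :=
  (2 <= m)%N /\ is_graph G /\ subgraph H G /\ rhomax_lt G (mbound m) /\
  exists (x1 x2 : nat) (ys : seq nat),
    x1 \in gV H /\ x2 \in gV H /\ x1 != x2 /\
        (1 <= size ys <= m.-1)%N /\ uniq ys /\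
        all (fun y => y \notin gV H) ys /\
        gV G = gV H `|` seq_fset tt ys /\
        gE G = gE H `|` walk_edges (x1 :: ys ++ [:: x2]).

Definition ext3 (m : nat) (H G : graph) : Prop :=
  (2 <= m)%N /\ is_graph G /\ subgraph H G /\ gV H = gV G /\
  gE H `<=` gE G /\ gE H != gE G /\ rhomax_lt G (mbound m).

Definition graph_iso (G G' : graph) : Prop :=
  exists f : nat -> nat, {in gV G &, injective f} /\
    gV G' = f @` gV G /\ gE G' = (fun e : {fset nat} => f @` e) @` gE G.

Inductive inHm (m : nat) : graph -> Prop :=
  | Hm_base G : one_vertex G -> inHm m G
  | Hm_iso G G' : inHm m G -> graph_iso G G' -> inHm m G'
  | Hm_ext1 H G : inHm m H -> ext1 m H G -> inHm m G
  | Hm_ext2 H G : inHm m H -> ext2 m H G -> inHm m G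
  | Hm_ext3 H G : inHm m H -> ext3 m H G -> inHm m G.

Definition mdecomp (m : nat) (G : graph) (Gs : nat -> graph) (t : nat) : Prop :=
  [/\ one_vertex (Gs 0%N),
      (forall i, (i < t)%N -> Gs i <> Gs i.+1 /\
                 (ext1 m (Gs i) (Gs i.+1) \/ ext2 m (Gs i) (Gs i.+1))),
      subgraph (Gs t) G &
      (G = Gs t \/ ext3 m (Gs t) G)].

From HB Require Import structures.
From mathcomp Require Import all_boot all_order all_algebra.
From mathcomp Require Import finmap.
From mathcomp Require Import reals.
From mathcomp Require Import zify.
From mathcomp.algebra_tactics Require Import ring lra.
From Stdlib Require Import Classical.
Import Order.TTheory GRing.Theory Num.Theory.
Set Implicit Arguments. Unset Strict Implicit.

(* Extensions of the first and second type add s <= m - 1 new vertices and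
   s + 1 new edges, those of the third type only add edges.  By induction on the
   construction of H_m, every G in H_m satisfies b := m v - (m - 1) e <= m, and
   for every N <= v(G) some subgraph with between N and N + m - 2 vertices
   satisfies it too.
   (1) The decomposition forces e(G) > v(G), and rho^max(G) < m/(m-1) gives
   b > 0 for every subgraph.  The densest subgraph of G either satisfies b <= m
   or is at most as dense as G itself; in both cases the maximal density is
   e/v = 1 + 1/(m - 1 + b/a) for a := e - v > 0 and some 0 < b <= m.
   (2) A graph with v vertices and b <= m has density at least
   m/(m-1) - m/((m-1) v), which exceeds rho once v is large; the windows of
   bounded size provide such subgraphs. *)

Section WalkEdges.
Local Open Scope fset_scope.

Definition walk_edge_seq (w : seq nat) : seq {fset nat} :=
  map (fun p => [fset p.1; p.2]) (zip w (behead w)).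

Lemma walk_edge_seq_cons2 a b w :
  walk_edge_seq [:: a, b & w] = [fset a; b] :: walk_edge_seq (b :: w).
Proof. by []. Qed.

Lemma size_walk_edge_seq w : size (walk_edge_seq w) = (size w).-1.
Proof. by case: w => [|a w] //=; rewrite size_map size_zip /=; lia. Qed.

Lemma mem_walk_edge_seq w e x : e \in walk_edge_seq w -> x \in e -> x \in w.
Proof.
elim: w => [|a [|b w] IH] //; rewrite walk_edge_seq_cons2 inE.
case/orP => [/eqP -> | /IH xbw /xbw xbw']; last by rewrite inE xbw' orbT.
by rewrite in_fset2 !inE => /orP [] ->; rewrite ?orbT.
Qed.

Lemma walk_edge_seq_uniq_cons a b w : a \notin b :: w ->
  uniq (walk_edge_seq (b :: w)) -> uniq (walk_edge_seq [:: a, b & w]).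
Proof.
move=> aw U; rewrite walk_edge_seq_cons2 /= U andbT.
by apply/negP => /mem_walk_edge_seq /(_ (fset21 a b)); apply/negP.
Qed.

Lemma walk_edge_seq_uniq w : uniq w -> uniq (walk_edge_seq w).
Proof.
elim: w => [|a [|b w] IH] // /andP [aw U].
exact: walk_edge_seq_uniq_cons aw (IH U).
Qed.

Lemma walk_edge_seq_uniq_cycle z w : uniq (z :: w) -> (2 <= size w)%N ->
  uniq (walk_edge_seq (z :: w ++ [:: z])).
Proof.
case: w => [|a [|b w]] // U _.
have U' : uniq (walk_edge_seq (rcons [:: a, b & w] z)).
  by apply: walk_edge_seq_uniq; rewrite rcons_uniq -cons_uniq.
case/andP: (U) => zabw /andP [abw _].
rewrite cat_cons cats1 walk_edge_seq_cons2 cons_uniq U' andbT /= walk_edge_seq_cons2 inE.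
apply/norP; split.
  apply/negP => /eqP E; have : b \in [fset z; a] by rewrite E fset22.
  rewrite in_fset2 => /orP [/eqP bz | /eqP ba].
    by rewrite bz !inE eqxx orbT in zabw.
  by rewrite ba mem_head in abw.
apply/negP => /mem_walk_edge_seq /(_ (fset22 z a)).
by rewrite -rcons_cons mem_rcons inE (negbTE abw) orbF => /eqP az; rewrite az mem_head in zabw.
Qed.

Lemma walk_edge_seq_inner ys a c e : ys != [::] ->
  e \in walk_edge_seq (a :: ys ++ [:: c]) -> exists2 y, y \in ys & y \in e.
Proof.
elim: ys a => [|y ys IH] a // _; rewrite cat_cons walk_edge_seq_cons2 inE.
case/orP => [/eqP -> | He]; first by exists y; rewrite ?inE ?in_fset2 eqxx ?orbT.
case: ys IH He => [|y' ys] IH He.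
  by exists y; rewrite ?inE //; move: He; rewrite /= inE => /eqP ->; rewrite in_fset2 eqxx.
by have [z zys ze] := IH y isT He; exists z; rewrite // inE zys orbT.
Qed.

Lemma card_walk_edges w : uniq (walk_edge_seq w) -> #|` walk_edges w| = (size w).-1.
Proof.
by move=> U; rewrite size_seq_fset -/(walk_edge_seq w) undup_id // size_walk_edge_seq.
Qed.

End WalkEdges.

Section Extensions.
Local Open Scope fset_scope.

Lemma card_path_extension (H G : graph) (ys : seq nat) a c :
  is_graph H -> ys != [::] -> all (fun y => y \notin gV H) ys ->
  gV G = gV H `|` seq_fset tt ys ->
  gE G = gE H `|` walk_edges (a :: ys ++ [:: c]) ->
  uniq (walk_edge_seq (a :: ys ++ [:: c])) ->
  (nv G <= nv H + size ys)%N /\ ne G = (ne H + (size ys).+1)%N.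
Proof.
move=> gH ys0 ysH eV eE U; split.
  rewrite /nv eV; apply: leq_trans (leq_card_fsetU _ _) _.
  by rewrite leq_add2l size_seq_fset size_undup.
have disj : [disjoint gE H & walk_edges (a :: ys ++ [:: c])].
  apply/fdisjointP => e eH; apply/negP; rewrite seq_fsetE => /walk_edge_seq_inner.
  case/(_ ys0) => y yys ye; have [_ /fsubsetP eV'] := gH e eH.
  by move: (allP ysH y yys); rewrite eV'.
move: (leq_card_fsetU (gE H) (walk_edges (a :: ys ++ [:: c]))).2.
by rewrite /ne eE disj => /eqP ->; rewrite card_walk_edges //= size_cat addn1.
Qed.

Lemma ext1_card m H G : ext1 m H G ->
  exists2 s, (s <= m.-1)%N & (nv G <= nv H + s)%N /\ ne G = (ne H + s.+1)%N.
Proof.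
case=> _ [_ [[gH _] [_ [x1 [t1 [t2 [y1 [y2
  [x1H [<- [<- [t22 [tm [U [ysH [eV eE]]]]]]]]]]]]]]]].
have x1y : x1 \notin y1 ++ y2 by apply/negP => /(allP ysH); rewrite x1H.
have ys0 : y1 ++ y2 != [::] by case: (y1) => //; case: (y2) t22.
have Uw : uniq (walk_edge_seq (x1 :: (y1 ++ y2) ++ [:: head x1 y1])).
  case: y1 U x1y {ys0 ysH eV eE tm} => [|c y1] U x1y /=.
    by apply: walk_edge_seq_uniq_cycle; rewrite /= ?x1y.
  rewrite cat_cons in U x1y; apply: walk_edge_seq_uniq_cons.
    rewrite -cat_cons mem_cat negb_or x1y mem_seq1 /=.
    by apply: contraNneq x1y => ->; rewrite mem_head.
  by apply: walk_edge_seq_uniq_cycle; rewrite // size_cat ltn_addl.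
rewrite catA in eE; have := card_path_extension gH ys0 ysH eV eE Uw.
by exists (size (y1 ++ y2)); rewrite // size_cat.
Qed.

Lemma ext2_card m H G : ext2 m H G ->
  exists2 s, (s <= m.-1)%N & (nv G <= nv H + s)%N /\ ne G = (ne H + s.+1)%N.
Proof.
case=> _ [_ [[gH _] [_ [x1 [x2 [ys
  [x1H [x2H [x12 [/andP [ys1 ysm] [U [ysH [eV eE]]]]]]]]]]]]].
have x1y : x1 \notin ys by apply/negP => /(allP ysH); rewrite x1H.
have x2y : x2 \notin ys by apply/negP => /(allP ysH); rewrite x2H.
have ys0 : ys != [::] by case: (ys) ys1.
have Uw : uniq (walk_edge_seq (x1 :: ys ++ [:: x2])).
  apply: walk_edge_seq_uniq.
  by rewrite cats1 /= mem_rcons inE negb_or x12 x1y rcons_uniq x2y.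
by exists (size ys); last exact: card_path_extension gH ys0 ysH eV eE Uw.
Qed.

Lemma ext12_card m H G : ext1 m H G \/ ext2 m H G ->
  exists2 s, (s <= m.-1)%N & (nv G <= nv H + s)%N /\ ne G = (ne H + s.+1)%N.
Proof. by case=> [/ext1_card | /ext2_card]. Qed.

Lemma ext12_graph m H G : ext1 m H G \/ ext2 m H G ->
  [/\ is_graph G, subgraph H G & rhomax_lt G (mbound m)].
Proof. by case=> [[_ [? [? [? _]]]] | [_ [? [? [? _]]]]]. Qed.

Lemma ext3_card m H G : ext3 m H G -> nv G = nv H /\ (ne H < ne G)%N.
Proof.
case=> _ [_ [_ [eV [sE [nE _]]]]]; split; first by rewrite /nv eV.
by apply: fproper_ltn_card; rewrite fproperEneq nE sE.
Qed.

Lemma ext3_graph m H G : ext3 m H G ->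
  [/\ is_graph G, subgraph H G & rhomax_lt G (mbound m)].
Proof. by case=> _ [? [? [_ [_ [_ ?]]]]]. Qed.

End Extensions.

Section Subgraphs.
Local Open Scope fset_scope.

Lemma one_vertex_card G : one_vertex G -> [/\ is_graph G, nv G = 1%N & ne G = 0%N].
Proof.
case=> x [eV eE]; split; last by rewrite /ne eE cardfs0.
  by move=> e; rewrite eE.
by rewrite /nv eV cardfs1.
Qed.

Lemma subgraph_refl G : is_graph G -> subgraph G G.
Proof. by move=> gG; split => //; split; apply: fsubset_refl. Qed.

Lemma subgraph_trans K H G : subgraph H K -> subgraph K G -> subgraph H G.
Proof.
case=> gH [sV sE] [_ [sV' sE']]; do !split => //.
  exact: fsubset_trans sV sV'.
exact: fsubset_trans sE sE'.
Qed.

Lemma subgraph_card H G : subgraph H G -> (nv H <= nv G)%N /\ (ne H <= ne G)%N.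
Proof. by case=> _ [sV sE]; split; apply: fsubset_leq_card. Qed.

Lemma imfsetS (K V : choiceType) (f : K -> V) (A B : {fset K}) :
  A `<=` B -> f @` A `<=` f @` B.
Proof. by move=> /fsubsetP sAB; apply: subset_imfset. Qed.

Definition graph_image (f : nat -> nat) (G : graph) : graph :=
  Graph (f @` gV G) ((fun e : {fset nat} => f @` e) @` gE G).

Lemma graph_isoP G G' : graph_iso G G' ->
  exists2 f : nat -> nat, {in gV G &, injective f} & G' = graph_image f G.
Proof. by case: G' => V E [f [fi [/= -> ->]]]; exists f. Qed.

Section Image.
Variables (f : nat -> nat) (G : graph).
Hypothesis f_inj : {in gV G &, injective f}.

Let f_injS (A : {fset nat}) : A `<=` gV G -> {in A &, injective f}.
Proof. by move=> /fsubsetP sA x y /sA xG /sA yG; apply: f_inj. Qed.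

Let imfset_inj (A B : {fset nat}) : A `<=` gV G -> B `<=` gV G ->
  f @` A = f @` B -> A = B.
Proof.
suff sub : forall A B, A `<=` gV G -> B `<=` gV G -> f @` A = f @` B -> A `<=` B.
  by move=> sA sB E; apply/eqP; rewrite eqEfsubset (sub A B) ?(sub B A).
move=> {}A {}B /fsubsetP sA /fsubsetP sB E; apply/fsubsetP => x xA.
have : f x \in f @` B by rewrite -E; apply: in_imfset.
case/imfsetP => y yB fxy.
by rewrite (f_inj (sA x xA) (sB y yB) fxy).
Qed.

Lemma subgraph_image H : subgraph H G ->
  [/\ subgraph (graph_image f H) (graph_image f G),
      nv (graph_image f H) = nv H & ne (graph_image f H) = ne H].
Proof.
move=> [gH [sV sE]]; split.
- split; last by split; apply: imfsetS.
  move=> _ /imfsetP [e eH ->]; have [e2 se] := gH e eH.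
  split; last exact: imfsetS.
  by rewrite card_in_imfset //; apply: f_injS; apply: fsubset_trans sV.
- by rewrite /nv card_in_imfset //; apply: f_injS.
- rewrite /ne card_in_imfset // => e1 e2 e1H e2H; apply: imfset_inj.
    by have [_ se] := gH e1 e1H; apply: fsubset_trans sV.
  by have [_ se] := gH e2 e2H; apply: fsubset_trans sV.
Qed.

End Image.

End Subgraphs.

Section Densest.
Local Open Scope order_scope.

Lemma exists_argmax (T : eqType) d (R : orderType d) (f : T -> R)
    (P : T -> Prop) (s : seq T) :
  (forall x, P x -> x \in s) -> (exists x, P x) ->
  exists2 x, P x & forall y, P y -> f y <= f x.
Proof.
elim: s P => [|a s IH] P Ps [x Px]; first by have := Ps x Px.
pose Q y := P y /\ y <> a.
have Qs y : Q y -> y \in s by case=> /Ps; rewrite inE => /predU1P [].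
have [[y Qy] | noQ] := classic (exists y, Q y).
- have [z [Pz _] zmax] := IH Q Qs (ex_intro _ y Qy).
  have [Pa | nPa] := classic (P a); last first.
    by exists z => // y' Py'; apply: zmax; split => // ya; apply: nPa; rewrite -ya.
  have [faz | fza] := leP (f a) (f z).
    by exists z => // y' Py'; case: (eqVneq y' a) => [-> // | /eqP ya]; apply: zmax.
  exists a => // y' Py'; case: (eqVneq y' a) => [-> // | /eqP ya].
  exact: le_trans (zmax y' (conj Py' ya)) (ltW fza).
- have onlya y : P y -> y = a by move=> Py; apply: NNPP => ya; apply: noQ; exists y.
  by exists a => [|y /onlya ->]; rewrite -?(onlya x Px).
Qed.

End Densest.

Definition densest_in G H :=
  [/\ subgraph H G, (0 < nv H)%N &
      forall K, subgraph K G -> (0 < nv K)%N -> (density K <= density H)%R].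

Lemma densest_subgraph G : is_graph G -> (0 < nv G)%N -> exists H, densest_in G H.
Proof.
move=> gG vG.
pose P p := exists K, [/\ subgraph K G, (0 < nv K)%N & (ne K, nv K) = p].
pose s := [seq (a, b) | a <- iota 0 (ne G).+1, b <- iota 0 (nv G).+1].
have Ps p : P p -> p \in s.
  case=> K [/subgraph_card [vK eK] _ <-]; apply/allpairsP; exists (ne K, nv K).
  by rewrite !mem_iota !add0n !ltnS vK eK.
have PG : P (ne G, nv G) by exists G; split => //; apply: subgraph_refl.
have [_ [H [sH vH <-]] Hmax] :=
  exists_argmax (fun p : nat * nat => (p.1%:R / p.2%:R : rat)) Ps (ex_intro _ _ PG).
by exists H; split => // K sK vK; apply: (Hmax (ne K, nv K)); exists K.
Qed.

Section DensityArith.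
Local Open Scope ring_scope.

Lemma density_le H K : (0 < nv H)%N -> (0 < nv K)%N ->
  (density H <= density K) = (ne H * nv K <= ne K * nv H)%N.
Proof.
move=> vH vK; rewrite /density ler_pdivrMr ?ltr0n // mulrAC ler_pdivlMr ?ltr0n //.
by rewrite -!natrM ler_nat.
Qed.

Lemma density_lt_mbound m G : (1 < m)%N -> (0 < nv G)%N ->
  (density G < mbound m) = (m.-1 * ne G < m * nv G)%N.
Proof.
move=> m1 vG; rewrite /density /mbound ltr_pdivrMr ?ltr0n // mulrAC.
by rewrite ltr_pdivlMr ?ltr0n -?subn1 ?subn_gt0 // -!natrM ltr_nat mulnC [(m * _)%N]mulnC.
Qed.

(* With a := e - v and b := m v - (m - 1) e one has m - 1 + b / a = v / (e - v). *)
Lemma density_critical_form m G : (0 < nv G)%N -> (nv G < ne G)%N ->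
  (m.-1 * ne G < m * nv G)%N ->
  density G = 1 + 1 / ((m.-1)%:R + (m * nv G - m.-1 * ne G)%:R / (ne G - nv G)%:R).
Proof.
case: m => [|k]; first by rewrite mul0n.
rewrite /density [k.+1.-1]/= => vG ve /ltnW bpos.
have v0 : (nv G)%:R != 0 :> rat by rewrite pnatr_eq0 -lt0n.
have a0 : (ne G - nv G)%:R != 0 :> rat by rewrite pnatr_eq0 subn_eq0 -ltnNge.
rewrite natrB ?(ltnW ve) // in a0 *; rewrite natrB // !natrM -natr1.
set e := (ne G)%:R in a0 *; set v := (nv G)%:R in v0 *.
have bv : k%:R * (e - v) + ((k%:R + 1) * v - k%:R * e) = v by ring.
by field; rewrite a0 bv.
Qed.

End DensityArith.

Definition dense_bound m G := (m * nv G <= m.-1 * ne G + m)%N.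

Section RhoMax.
Local Open Scope ring_scope.
Variables (m : nat) (G : graph).
Hypotheses (m1 : (1 < m)%N) (gG : is_graph G) (rG : rhomax_lt G (mbound m)).

Let below K : subgraph K G -> (0 < nv K)%N -> (m.-1 * ne K < m * nv K)%N.
Proof. by move=> sK vK; rewrite -density_lt_mbound // rG. Qed.

(* If the densest subgraph violates the bound, then G itself, which satisfies
   it, is at least as dense. *)
Lemma densest_dense_bound : (0 < nv G)%N -> dense_bound m G -> (nv G < ne G)%N ->
  exists2 K, densest_in G K & (nv K < ne K)%N /\ dense_bound m K.
Proof.
move=> vG bG eG; have [H [sH vH Hmax]] := densest_subgraph gG vG.
have GH : (ne G * nv H <= ne H * nv G)%N by rewrite -density_le // Hmax ?subgraph_refl.
have [bH | bH] := leqP (m * nv H) (m.-1 * ne H + m).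
  by exists H; split => //; nia.
have [vHG _] := subgraph_card sH.
have HG : density H <= density G.
  rewrite density_le //; rewrite /dense_bound in bG.
  suff : (m.-1 * (ne H * nv G) <= m.-1 * (ne G * nv H))%N by rewrite leq_pmul2l //; lia.
  nia.
exists G => //; split; [exact: subgraph_refl | done |].
by move=> K sK vK; apply: le_trans (Hmax K sK vK) HG.
Qed.

Lemma rhomax_critical_form : (0 < nv G)%N -> dense_bound m G -> (nv G < ne G)%N ->
  exists a b : nat, [/\ (0 < a)%N, (0 < b)%N, (b <= m)%N &
    is_rhomax G (1 + 1 / ((m.-1)%:R + b%:R / a%:R))].
Proof.
move=> vG bG eG; have [K [sK vK Kmax] [eK bK]] := densest_dense_bound vG bG eG.
have bK' := below sK vK; rewrite /dense_bound in bK.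
exists (ne K - nv K)%N, (m * nv K - m.-1 * ne K)%N; split; [lia | lia | lia |].
by rewrite -density_critical_form //; split; first by exists K.
Qed.

End RhoMax.

Definition dense_windows m G := forall N, (0 < N)%N -> (N <= nv G)%N ->
  exists H, [/\ subgraph H G, (N <= nv H)%N, (nv H < N + m.-1)%N & dense_bound m H].

Definition Hm_invariant m G := [/\ is_graph G, dense_bound m G & dense_windows m G].

Lemma Hm_invariant_one_vertex m G : (1 < m)%N -> one_vertex G -> Hm_invariant m G.
Proof.
move=> m1 /one_vertex_card [gG vG eG].
have bG : dense_bound m G by rewrite /dense_bound vG eG muln1 muln0.
by split => // N N0 NG; exists G; split; [exact: subgraph_refl | done | lia | done].
Qed.

Lemma Hm_invariant_iso m G G' : Hm_invariant m G -> graph_iso G G' -> Hm_invariant m G'.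
Proof.
case=> gG bG wG /graph_isoP [f f_inj ->].
have [sG vG eG] := subgraph_image f_inj (subgraph_refl gG).
split; [exact: sG.1 | by rewrite /dense_bound vG eG |].
move=> N N0; rewrite vG => /(wG N N0) [K [sK NK KN bK]].
have [sK' vK eK] := subgraph_image f_inj sK.
by exists (graph_image f K); rewrite /dense_bound vK eK.
Qed.

Lemma Hm_invariant_ext12 m H G : (0 < m)%N -> ext1 m H G \/ ext2 m H G ->
  Hm_invariant m H -> Hm_invariant m G.
Proof.
move=> m0 X [gH bH wH]; have [gG sHG _] := ext12_graph X.
have [s sm [vG eG]] := ext12_card X.
have bG : dense_bound m G by move: bH; rewrite /dense_bound eG; nia.
split => // N N0 NG; have [NH | HN] := leqP N (nv H).
  by have [K [sK ? ? ?]] := wH N N0 NH; exists K; split => //; apply: subgraph_trans sHG.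
by exists G; split; [exact: subgraph_refl | done | lia | done].
Qed.

Lemma Hm_invariant_ext3 m H G : ext3 m H G -> Hm_invariant m H -> Hm_invariant m G.
Proof.
move=> X [gH bH wH]; have [gG sHG _] := ext3_graph X; have [vG eG] := ext3_card X.
split => //.
  rewrite /dense_bound vG; apply: leq_trans bH _.
  by rewrite leq_add2r leq_mul2l (ltnW eG) orbT.
move=> N N0; rewrite vG => /(wH N N0) [K [sK ? ? ?]].
by exists K; split => //; apply: subgraph_trans sHG.
Qed.

Lemma inHm_invariant m G : (1 < m)%N -> inHm m G -> Hm_invariant m G.
Proof.
move=> m1; elim=> {G} [G | G G' _ | H G _ IH X | H G _ IH X | H G _ IH X].
- exact: Hm_invariant_one_vertex.
- exact: Hm_invariant_iso.
- by apply: Hm_invariant_ext12 IH; [apply: ltnW | left].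
- by apply: Hm_invariant_ext12 IH; [apply: ltnW | right].
- exact: Hm_invariant_ext3 X IH.
Qed.

Lemma mdecomp_steps m G Gs t : mdecomp m G Gs t -> forall i, (i <= t)%N ->
  (0 < nv (Gs i))%N /\ (nv (Gs i) + i <= ne (Gs i) + 1)%N.
Proof.
case=> o0 st _ _; elim=> [|i IH] it.
  by have [_ -> ->] := one_vertex_card o0.
have [v0 e0] := IH (ltnW it); have [_ X] := st i it.
have [_ sHG _] := ext12_graph X; have [vv _] := subgraph_card sHG.
by have [s _ [vG ->]] := ext12_card X; split; lia.
Qed.

Lemma mdecomp_excess m G Gs t : mdecomp m G Gs t ->
  ((t = 1%N /\ Gs t <> G) \/ (2 <= t)%N) ->
  [/\ rhomax_lt G (mbound m), (0 < nv G)%N & (nv G < ne G)%N].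
Proof.
move=> D tc; have t0 : (0 < t)%N by case: tc => [[->] | ]; lia.
have [vt et] := mdecomp_steps D (leqnn t).
case: D => _ st _ [EG | X3].
  have := st t.-1; rewrite prednK // -EG => /(_ (leqnn t)) [_ /ext12_graph [_ _ rG]].
  split; rewrite // EG //; case: tc => [[_] | ]; [by rewrite EG | lia].
have [_ _ rG] := ext3_graph X3; have [vG eG] := ext3_card X3.
by split => //; rewrite vG; lia.
Qed.

Section Threshold.
Local Open Scope ring_scope.

Lemma density_gt_of_dense_bound (R : archiFieldType) m (r : R) : (1 < m)%N ->
  r < m%:R / (m.-1)%:R -> exists2 N, (0 < N)%N &
    forall H, (N <= nv H)%N -> dense_bound m H -> r < ratr (density H).
Proof.
move=> m1 rm; have k0 : (0 : R) < (m.-1)%:R by rewrite ltr0n -subn1 subn_gt0.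
set k : R := (m.-1)%:R in k0 rm *.
set d : R := m%:R - k * r.
have d0 : 0 < d by rewrite subr_gt0 mulrC -ltr_pdivlMr.
pose N := (Num.bound (m%:R / d)).+1.
have hN : m%:R / d < N%:R.
  apply: lt_le_trans (archi_boundP _) _; first by rewrite divr_ge0 // ?ler0n ltW.
  by rewrite ler_nat.
exists N => // H NH bH.
have vH : (0 : R) < (nv H)%:R by rewrite ltr0n; apply: leq_trans NH.
rewrite /density fmorph_div !rmorph_nat ltr_pdivlMr // -(ltr_pM2l k0).
have {}bH : m%:R * (nv H)%:R <= k * (ne H)%:R + m%:R :> R.
  by rewrite /k -!natrM -natrD ler_nat.
have md : m%:R < (nv H)%:R * d.
  by rewrite -ltr_pdivrMr //; apply: lt_le_trans hN _; rewrite ler_nat.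
rewrite /d in md; nra.
Qed.

End Threshold.

Local Open Scope ring_scope.

Theorem lemma1 (R : realType) (m : nat) (hm : (3 <= m)%N) :
  (forall (G : graph) (Gs : nat -> graph) (t : nat),
     inHm m G -> mdecomp m G Gs t ->
     ((t = 1%N /\ Gs t <> G) \/ (2 <= t)%N) ->
     exists a b : nat, [/\ (0 < a)%N, (0 < b)%N, (b <= m)%N &
       is_rhomax G (1 + 1 / ((m.-1)%:R + b%:R / a%:R))])
  /\
  (forall r : R, 1 < r -> r < (m%:R / (m.-1)%:R) ->
     exists eta : nat, forall v : nat, (eta < v)%N ->
       forall G : graph, inHm m G -> nv G = v ->
         exists H : graph, [/\ subgraph H G, (nv H <= eta)%N & r < ratr (density H)]).
Proof.
have m1 : (1 < m)%N by apply: ltnW.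
split.
  move=> G Gs t hG D tc; have [gG bG _] := inHm_invariant m1 hG.
  have [rG vG eG] := mdecomp_excess D tc.
  exact: rhomax_critical_form.
move=> r _ rm; have [N N0 dense] := density_gt_of_dense_bound m1 rm.
exists (N + m.-2)%N => v vlt G hG vG; have [_ _ wG] := inHm_invariant m1 hG.
have [H [sH NH HN bH]] := wG N N0 (ltac:(lia)).
by exists H; split => //; [lia | exact: dense].
Qed.
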